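(* Let $\theta\in(0,\pi)$. Then for all $x,y\in S_\theta$, $$\frac{p_{S_\theta}(x,y)}{\sqrt2\cos(\theta/4)}\le s_{S_\theta}(x,y),$$ and the constant is sharp.
   Context: $S_\theta=\{x\in\mathbb{C}:0<\arg(x)<\theta\}$. For a domain $G\subsetneq\mathbb{C}$, $d_G(x)=\inf\{|x-z|:z\in\partial G\}$, $s_G(x,y)=\frac{|x-y|}{\inf_{z\in\partial G}(|x-z|+|z-y|)}$, $p_G(x,y)=\frac{|x-y|}{\sqrt{|x-y|^2+4d_G(x)d_G(y)}}$. *)

From Stdlib Require Import Reals.
From Coquelicot Require Import Coquelicot.
Open Scope R_scope.

(* S_theta = { x in C : 0 < arg x < theta }, written via polar form:
   x = r e^{it} with r > 0 and 0 < t < theta (for 0 < theta < pi this is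
   exactly the set of nonzero x whose principal argument lies in (0,theta)). *)
Definition sector (theta : R) (x : C) : Prop :=
  exists r t : R, 0 < r /\ 0 < t < theta /\ x = (r * cos t, r * sin t)%R.

Definition boundary (G : C -> Prop) (z : C) : Prop :=
  forall eps : R, 0 < eps ->
    (exists w, G w /\ Cmod (w - z) < eps) /\
    (exists w, ~ G w /\ Cmod (w - z) < eps).

Definition dist_bd (G : C -> Prop) (x : C) : R :=
  real (Glb_Rbar (fun r => exists z, boundary G z /\ r = Cmod (x - z))).

Definition s_metric (G : C -> Prop) (x y : C) : R :=
  Cmod (x - y) /
  real (Glb_Rbar (fun r => exists z, boundary G z /\ r = Cmod (x - z) + Cmod (z - y))).

Definition p_metric (G : C -> Prop) (x y : C) : R :=
  Cmod (x - y) / sqrt (Cmod (x - y) ^ 2 + 4 * dist_bd G x * dist_bd G y).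

From Stdlib Require Import Reals Lra Psatz.
From Coquelicot Require Import Coquelicot.
Open Scope R_scope.

(* A boundary point of S_theta lies on Im = 0 or on the line R e^{i theta}, so
   d(x) >= min(Im x, dist(x, R e^{i theta})).  Reflecting y in the real axis, the
   detour through the point where the segment [x, conj y] meets the real axis has
   length |x - conj y|, and |x - conj y|^2 = |x - y|^2 + 4 Im x Im y.  Using the
   reflection in the bisector and the symmetry in x, y we may assume
   arg x <= arg y and arg x + arg y <= theta; then that point lies on the boundary,
   and the inequality reduces to a trigonometric one.  For x = e^{i theta/4} and
   its mirror image y = e^{3 i theta/4} every detour is at least
   |x - conj y| = sqrt 2 cos(theta/4) sqrt(|x - y|^2 + 4 sin^2(theta/4)), while
   d(x), d(y) <= sin(theta/4); so the constant is sharp. *)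

Lemma Rdiv_le_contravar_r (a b c : R) : 0 <= a -> 0 < b -> b <= c -> a / c <= a / b.
Proof.
  intros Ha Hb Hbc. unfold Rdiv.
  apply Rmult_le_compat_l; [exact Ha|]. apply Rinv_le_contravar; assumption.
Qed.

Lemma Rdiv_lt_contravar_r (a b c : R) : 0 < a -> 0 < b -> b < c -> a / c < a / b.
Proof.
  intros Ha Hb Hbc. unfold Rdiv.
  apply Rmult_lt_compat_l; [exact Ha|]. apply Rinv_lt_contravar; [nra|exact Hbc].
Qed.

Lemma Rle_mult_sqrt (a k Q : R) : 0 <= a -> 0 <= k -> a ^ 2 <= k ^ 2 * Q -> a <= k * sqrt Q.
Proof.
  intros Ha Hk H.
  rewrite <- (sqrt_pow2 a Ha), <- (sqrt_pow2 k Hk), <- sqrt_mult_alt by apply pow2_ge_0.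
  apply sqrt_le_1_alt, H.
Qed.

Lemma Glb_Rbar_real_between (E : R -> Prop) (m e : R) :
  E e -> (forall r, E r -> m <= r) -> m <= real (Glb_Rbar E) <= e.
Proof.
  intros He Hm. destruct (Glb_Rbar_correct E) as [Hlb Hglb].
  specialize (Hlb e He).
  assert (Hm' : Rbar_le m (Glb_Rbar E)) by (apply Hglb; intros r Hr; apply Hm, Hr).
  destruct (Glb_Rbar E); simpl in *; tauto.
Qed.

Lemma Cmod_sub_sq (x y : C) :
  Cmod (x - y) ^ 2 = (fst x - fst y) ^ 2 + (snd x - snd y) ^ 2.
Proof. rewrite Cmod2_alt. reflexivity. Qed.

Lemma Cmod_sub_sym (x y : C) : Cmod (x - y) = Cmod (y - x).
Proof. rewrite <- Cmod_opp. f_equal. ring. Qed.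

Lemma Cmod_sub_triangle (x y z : C) : Cmod (x - z) <= Cmod (x - y) + Cmod (y - z).
Proof.
  replace (x - z)%C with ((x - y) + (y - z))%C by ring. apply Cmod_triangle.
Qed.

Lemma Rabs_snd_sub_le_Cmod (u v : C) : Rabs (snd u - snd v) <= Cmod (u - v).
Proof. eapply Rle_trans; [apply Rmax_r|apply (Rmax_Cmod (u - v)%C)]. Qed.

Lemma Cmod_sub_eq (x y : C) (e : R) :
  0 <= e -> (fst x - fst y) ^ 2 + (snd x - snd y) ^ 2 = e ^ 2 -> Cmod (x - y) = e.
Proof. intros He H. rewrite <- (sqrt_pow2 e He), <- H. reflexivity. Qed.

Lemma Cconj_real (z : C) : snd z = 0 -> Cconj z = z.
Proof. destruct z as [a b]; unfold Cconj; simpl; intros ->. f_equal. lra. Qed.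

Lemma Cmod_sub_conj_sym (x y : C) : Cmod (x - Cconj y) = Cmod (y - Cconj x).
Proof. rewrite <- Cmod_conj, Cminus_conj, Cconj_conj. apply Cmod_sub_sym. Qed.

Lemma Cmod_sub_conj_sq (x y : C) :
  Cmod (x - Cconj y) ^ 2 = Cmod (x - y) ^ 2 + 4 * snd x * snd y.
Proof. rewrite !Cmod_sub_sq. simpl. ring. Qed.

Lemma Cmod_conj_le_detour (x y z : C) :
  snd z = 0 -> Cmod (x - Cconj y) <= Cmod (x - z) + Cmod (z - y).
Proof.
  intros Hz. rewrite <- (Cmod_conj (z - y)), Cminus_conj, (Cconj_real z Hz).
  apply Cmod_sub_triangle.
Qed.

(* The point where the segment [x, conj y] meets the real axis. *)
Definition axis_crossing (x y : C) : C := (snd (x * y)%C / (snd x + snd y), 0).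

Lemma Cmod_scal_nonneg (l : R) (w : C) : 0 <= l -> Cmod (l * w) = l * Cmod w.
Proof. intros Hl. rewrite Cmod_mult, Cmod_R, Rabs_pos_eq by exact Hl. reflexivity. Qed.

Lemma detour_axis_crossing (x y : C) : 0 < snd x -> 0 < snd y ->
  Cmod (x - axis_crossing x y) + Cmod (axis_crossing x y - y) = Cmod (x - Cconj y).
Proof.
  intros Hx Hy. set (z := axis_crossing x y).
  set (l := snd x / (snd x + snd y)).
  assert (Hxz : (x - z = l * (x - Cconj y))%C).
  { destruct x as [x1 x2], y as [y1 y2]; unfold z, l, axis_crossing; simpl in *.
    apply injective_projections; simpl; field; lra. }
  assert (Hzy : (z - Cconj y = (1 - l)%R * (x - Cconj y))%C).
  { destruct x as [x1 x2], y as [y1 y2]; unfold z, l, axis_crossing; simpl in *.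
    apply injective_projections; simpl; field; lra. }
  assert (Hl : 0 <= l) by (apply Rdiv_le_0_compat; lra).
  assert (Hl' : 0 <= 1 - l).
  { replace (1 - l) with (snd y / (snd x + snd y)) by (unfold l; field; lra).
    apply Rdiv_le_0_compat; lra. }
  rewrite <- (Cmod_conj (z - y)), Cminus_conj, (Cconj_real z eq_refl).
  rewrite Hxz, Hzy, !Cmod_scal_nonneg by lra. ring.
Qed.

Definition polar (r a : R) : C := (r * cos a, r * sin a).

Lemma Cmod_polar_sub_sq (r1 r2 a b : R) :
  Cmod (polar r1 a - polar r2 b) ^ 2 = r1 ^ 2 + r2 ^ 2 - 2 * r1 * r2 * cos (a - b).
Proof.
  rewrite Cmod_sub_sq, cos_minus. simpl.
  pose proof (sin2_cos2 a) as Ha. pose proof (sin2_cos2 b) as Hb. unfold Rsqr in *.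
  nra.
Qed.

Lemma Cconj_polar (r a : R) : Cconj (polar r a) = polar r (- a).
Proof. unfold Cconj, polar; simpl. rewrite cos_neg, sin_neg. f_equal. ring. Qed.

Lemma snd_polar_mult (r1 r2 a b : R) :
  snd (polar r1 a * polar r2 b)%C = r1 * r2 * sin (a + b).
Proof. simpl. rewrite sin_plus. ring. Qed.

Lemma upper_half_plane_polar (w : C) :
  0 < snd w -> exists r t, 0 < r /\ 0 < t < PI /\ w = polar r t.
Proof.
  destruct w as [a b]; simpl; intros Hb.
  set (r := Cmod (a, b)).
  assert (Hr2 : r ^ 2 = a ^ 2 + b ^ 2) by apply Cmod2_alt.
  assert (Hr : 0 < r) by (pose proof (Cmod_ge_0 (a, b)) as Hr0; fold r in Hr0; nra).
  assert (Har : -1 < a / r < 1).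
  { split; apply (Rmult_lt_reg_r r); try lra; field_simplify; nra. }
  set (t := acos (a / r)).
  assert (Hc : cos t = a / r) by (apply cos_acos; lra).
  assert (Hs : sin t = b / r).
  { unfold t. rewrite sin_acos by lra.
    replace (1 - (a / r)²) with ((b / r) ^ 2) by (unfold Rsqr; field_simplify_eq; [nra|lra]).
    apply sqrt_pow2, Rlt_le, Rdiv_lt_0_compat; lra. }
  exists r, t. split; [exact Hr|]. split; [apply acos_bound_lt; lra|].
  unfold polar. rewrite Hc, Hs. f_equal; field; lra.
Qed.

Section Sector.

Variable th : R.
Hypothesis Hth : 0 < th < PI.

(* Reflection in the bisector of the sector.  It swaps the two edges, and
   [snd (bisector_refl w)] is the signed distance from w to the line R e^{i th}. *)
Definition bisector_refl (w : C) : C :=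
  (cos th * fst w + sin th * snd w, sin th * fst w - cos th * snd w).

Lemma bisector_refl_involutive (w : C) : bisector_refl (bisector_refl w) = w.
Proof.
  destruct w as [a b]. unfold bisector_refl; simpl.
  pose proof (sin2_cos2 th) as H. unfold Rsqr in H.
  f_equal.
  - pose proof (f_equal (Rmult a) H). lra.
  - pose proof (f_equal (Rmult b) H). lra.
Qed.

Lemma Cmod_bisector_refl (u v : C) :
  Cmod (bisector_refl u - bisector_refl v) = Cmod (u - v).
Proof.
  unfold Cmod, bisector_refl; simpl. f_equal.
  pose proof (sin2_cos2 th) as H. unfold Rsqr in H.
  pose proof (f_equal (Rmult ((fst u - fst v) ^ 2 + (snd u - snd v) ^ 2)) H).
  lra.
Qed.

Lemma bisector_refl_polar (r a : R) : bisector_refl (polar r a) = polar r (th - a).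
Proof.
  unfold bisector_refl, polar; simpl. rewrite cos_minus, sin_minus. f_equal; ring.
Qed.

Lemma sector_iff (w : C) : sector th w <-> 0 < snd w /\ 0 < snd (bisector_refl w).
Proof.
  split.
  - intros (r & t & Hr & Ht & ->). fold (polar r t).
    rewrite bisector_refl_polar. simpl.
    split; apply Rmult_lt_0_compat; try apply sin_gt_0; lra.
  - intros [Hw Hrw].
    destruct (upper_half_plane_polar w Hw) as (r & t & Hr & Ht & ->).
    rewrite bisector_refl_polar in Hrw. simpl in Hrw.
    exists r, t. split; [exact Hr|]. split; [|reflexivity].
    split; [lra|]. apply Rnot_le_lt. intros Hle.
    assert (Hsin : 0 <= sin (t - th)) by (apply sin_ge_0; lra).
    replace (th - t) with (- (t - th)) in Hrw by ring.
    rewrite sin_neg in Hrw. nra.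
Qed.

Lemma sector_bisector_refl (w : C) : sector th (bisector_refl w) <-> sector th w.
Proof. rewrite !sector_iff, bisector_refl_involutive. tauto. Qed.

Lemma boundary_bisector_refl (z : C) :
  boundary (sector th) z -> boundary (sector th) (bisector_refl z).
Proof.
  intros Hz eps Heps. destruct (Hz eps Heps) as [[w1 [H1 D1]] [w2 [H2 D2]]].
  split.
  - exists (bisector_refl w1). rewrite sector_bisector_refl, Cmod_bisector_refl. tauto.
  - exists (bisector_refl w2). rewrite sector_bisector_refl, Cmod_bisector_refl. tauto.
Qed.

Lemma boundary_snd_nonneg (z : C) : boundary (sector th) z -> 0 <= snd z.
Proof.
  intros Hz. apply Rnot_lt_le. intros Hneg.
  destruct (Hz (- snd z)) as [[w [Hw Hd]] _]; [lra|].
  apply sector_iff in Hw.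
  pose proof (Rabs_snd_sub_le_Cmod w z) as H. apply Rabs_le_between' in H. lra.
Qed.

Lemma boundary_not_sector (z : C) : boundary (sector th) z -> ~ sector th z.
Proof.
  intros Hz Hin. apply sector_iff in Hin as [H1 H2].
  destruct (Hz (Rmin (snd z) (snd (bisector_refl z)))) as [_ [w [Hw Hd]]].
  { apply Rmin_glb_lt; assumption. }
  apply Hw, sector_iff.
  pose proof (Rmin_l (snd z) (snd (bisector_refl z))).
  pose proof (Rmin_r (snd z) (snd (bisector_refl z))).
  pose proof (Rabs_snd_sub_le_Cmod w z) as E1.
  pose proof (Rabs_snd_sub_le_Cmod (bisector_refl w) (bisector_refl z)) as E2.
  rewrite Cmod_bisector_refl in E2.
  apply Rabs_le_between' in E1. apply Rabs_le_between' in E2. lra.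
Qed.

Lemma boundary_on_edges (z : C) :
  boundary (sector th) z -> snd z = 0 \/ snd (bisector_refl z) = 0.
Proof.
  intros Hz.
  pose proof (boundary_snd_nonneg z Hz).
  pose proof (boundary_snd_nonneg _ (boundary_bisector_refl z Hz)).
  pose proof (boundary_not_sector z Hz) as Hout. rewrite sector_iff in Hout.
  lra.
Qed.

Lemma boundary_nonneg_real (s : R) : 0 <= s -> boundary (sector th) (s, 0).
Proof.
  intros Hs eps Heps. set (d := eps / 2).
  assert (Hd : 0 < d) by (unfold d; lra).
  assert (Hs2 : 0 < sin (th / 2)) by (apply sin_gt_0; lra).
  assert (Hsth : 0 < sin th) by (apply sin_gt_0; lra).
  pose proof (sin2_cos2 (th / 2)) as Hp. unfold Rsqr in Hp.
  split.
  - exists ((s, 0) + polar d (th / 2))%C. split.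
    + apply sector_iff. unfold bisector_refl, polar; simpl. split; [nra|].
      assert (E : sin th * cos (th / 2) - cos th * sin (th / 2) = sin (th / 2)).
      { rewrite <- sin_minus. f_equal. field. }
      pose proof (f_equal (Rmult d) E). nra.
    + rewrite (Cmod_sub_eq _ _ d); [unfold d; lra|lra|]. simpl.
      pose proof (f_equal (Rmult (d * d)) Hp). lra.
  - exists (s, - d). split.
    + rewrite sector_iff. simpl. lra.
    + rewrite (Cmod_sub_eq _ _ d); [unfold d; lra|lra|]. simpl. ring.
Qed.

Definition dist_edges (w : C) : R := Rmin (snd w) (snd (bisector_refl w)).

Lemma dist_edges_pos (w : C) : sector th w -> 0 < dist_edges w.
Proof. rewrite sector_iff. intros [H1 H2]. apply Rmin_glb_lt; assumption. Qed.

Lemma dist_edges_bisector_refl (w : C) : dist_edges (bisector_refl w) = dist_edges w.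
Proof. unfold dist_edges. rewrite bisector_refl_involutive. apply Rmin_comm. Qed.

Lemma dist_edges_le_Cmod (x z : C) : boundary (sector th) z -> dist_edges x <= Cmod (x - z).
Proof.
  intros Hz. unfold dist_edges.
  pose proof (Rmin_l (snd x) (snd (bisector_refl x))).
  pose proof (Rmin_r (snd x) (snd (bisector_refl x))).
  pose proof (Rabs_snd_sub_le_Cmod x z) as E1.
  pose proof (Rabs_snd_sub_le_Cmod (bisector_refl x) (bisector_refl z)) as E2.
  rewrite Cmod_bisector_refl in E2.
  apply Rabs_le_between' in E1. apply Rabs_le_between' in E2.
  destruct (boundary_on_edges z Hz); lra.
Qed.

Lemma dist_bd_between (x z : C) : boundary (sector th) z ->
  dist_edges x <= dist_bd (sector th) x <= Cmod (x - z).
Proof.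
  intros Hz. apply Glb_Rbar_real_between.
  - exists z. split; [exact Hz|reflexivity].
  - intros r [z' [Hz' ->]]. apply dist_edges_le_Cmod, Hz'.
Qed.

Lemma sin_le_sin_sub (a : R) : 0 <= a <= th / 2 -> sin a <= sin (th - a).
Proof.
  intros Ha.
  assert (0 < cos (th / 2)) by (apply cos_gt_0; lra).
  assert (0 <= sin ((th - a - a) / 2)) by (apply sin_ge_0; lra).
  pose proof (form4 (th - a) a) as E.
  replace ((th - a + a) / 2) with (th / 2) in E by field.
  nra.
Qed.

Lemma dist_edges_polar (r a : R) : 0 <= r -> 0 <= a <= th / 2 ->
  dist_edges (polar r a) = r * sin a.
Proof.
  intros Hr Ha. unfold dist_edges. rewrite bisector_refl_polar. simpl.
  apply Rmin_left, Rmult_le_compat_l; [exact Hr|]. apply sin_le_sin_sub, Ha.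
Qed.

Definition sharp_const : R := sqrt 2 * cos (th / 4).

Lemma sharp_const_pos : 0 < sharp_const.
Proof.
  unfold sharp_const. apply Rmult_lt_0_compat; [apply sqrt_lt_R0; lra|].
  apply cos_gt_0; lra.
Qed.

Lemma sharp_const_sq : sharp_const ^ 2 = 1 + cos (th / 2).
Proof.
  unfold sharp_const. rewrite Rpow_mult_distr, pow2_sqrt by lra.
  replace (th / 2) with (2 * (th / 4)) by field. rewrite cos_2a_cos. ring.
Qed.

Definition detour_inf (x y : C) : R :=
  real (Glb_Rbar (fun r => exists z, boundary (sector th) z /\
                                     r = Cmod (x - z) + Cmod (z - y))).

Lemma detour_inf_between (x y z0 : C) (m : R) : boundary (sector th) z0 ->
  (forall z, boundary (sector th) z -> m <= Cmod (x - z) + Cmod (z - y)) ->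
  m <= detour_inf x y <= Cmod (x - z0) + Cmod (z0 - y).
Proof.
  intros Hz0 Hm. apply Glb_Rbar_real_between.
  - exists z0. split; [exact Hz0|reflexivity].
  - intros r [z [Hz ->]]. apply Hm, Hz.
Qed.

Definition short_detour (x y : C) : Prop :=
  exists z, boundary (sector th) z /\
    Cmod (x - z) + Cmod (z - y)
      <= sharp_const * sqrt (Cmod (x - y) ^ 2 + 4 * dist_edges x * dist_edges y).

Lemma short_detour_sym (x y : C) : short_detour x y -> short_detour y x.
Proof.
  intros [z [Hz Hd]]. exists z. split; [exact Hz|].
  rewrite (Cmod_sub_sym y z), (Cmod_sub_sym z x), (Cmod_sub_sym y x).
  replace (4 * dist_edges y * dist_edges x) with (4 * dist_edges x * dist_edges y) by ring.
  lra.
Qed.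

Lemma short_detour_bisector_refl (x y : C) :
  short_detour (bisector_refl x) (bisector_refl y) -> short_detour x y.
Proof.
  intros [z [Hz Hd]]. exists (bisector_refl z). split; [apply boundary_bisector_refl, Hz|].
  rewrite <- (bisector_refl_involutive x), <- (bisector_refl_involutive y) at 1 2.
  rewrite !Cmod_bisector_refl, !dist_edges_bisector_refl in *. exact Hd.
Qed.

Lemma short_detour_of_axis (x y : C) : sector th x -> sector th y ->
  0 <= snd (x * y)%C ->
  Cmod (x - Cconj y) ^ 2
    <= sharp_const ^ 2 * (Cmod (x - y) ^ 2 + 4 * dist_edges x * dist_edges y) ->
  short_detour x y.
Proof.
  intros Hx Hy Hxy Hineq.
  apply sector_iff in Hx as [Hx _]. apply sector_iff in Hy as [Hy _].
  exists (axis_crossing x y). split.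
  - apply boundary_nonneg_real, Rdiv_le_0_compat; lra.
  - rewrite detour_axis_crossing by assumption.
    apply Rle_mult_sqrt; [apply Cmod_ge_0|apply Rlt_le, sharp_const_pos|exact Hineq].
Qed.

Lemma cos_half_angle_ineq (u : R) : th / 2 <= u <= th ->
  0 <= cos (th / 2) + cos u + (1 + cos (th / 2)) * (cos (u - th) - 2 * cos (th / 2)).
Proof.
  (* With v = th - u the expression is
     2 cos(th/2) sin(v/2) (2 sin(th/2 - v/2) - sin(v/2)). *)
  intros Hu. set (T := th / 2). set (v := th - u).
  assert (HT : 0 < cos T) by (apply cos_gt_0; unfold T; lra).
  assert (Hsum : cos u + cos (u - th) = 2 * cos T * cos (T - v)).
  { rewrite form1. replace ((u - (u - th)) / 2) with T by (unfold T; field).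
    replace ((u + (u - th)) / 2) with (T - v) by (unfold T, v; field). ring. }
  assert (Hv : cos (u - th) = 1 - 2 * sin (v / 2) * sin (v / 2)).
  { rewrite <- cos_2a_sin. replace (u - th) with (- (2 * (v / 2))) by (unfold v; field).
    apply cos_neg. }
  assert (Hdiff : cos (T - v) - cos T = 2 * sin (v / 2) * sin (T - v / 2)).
  { rewrite form2. replace ((T - v - T) / 2) with (- (v / 2)) by field.
    replace ((T - v + T) / 2) with (T - v / 2) by field. rewrite sin_neg. ring. }
  assert (Hs0 : 0 <= sin (v / 2)) by (apply sin_ge_0; unfold v, T in *; lra).
  assert (Hs1 : sin (v / 2) <= sin (T - v / 2)) by (apply sin_incr_1; unfold v, T in *; lra).
  assert (P : 0 <= cos T * sin (v / 2) * (2 * sin (T - v / 2) - sin (v / 2))).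
  { apply Rmult_le_pos; [apply Rmult_le_pos|]; lra. }
  replace (cos u) with (2 * cos T * cos (T - v) - cos (u - th)) by lra.
  replace (cos (T - v)) with (cos T + 2 * sin (v / 2) * sin (T - v / 2)) by lra.
  rewrite Hv. lra.
Qed.

Lemma polar_opposite_halves_ineq (r1 r2 a b : R) :
  0 < r1 -> 0 < r2 -> 0 < a -> th / 2 <= b -> a + b <= th ->
  r1 ^ 2 + r2 ^ 2 - 2 * r1 * r2 * cos (a + b)
    <= (1 + cos (th / 2)) * (r1 ^ 2 + r2 ^ 2 - 2 * r1 * r2 * cos (a - b)
                             + 4 * (r1 * sin a) * (r2 * sin (th - b))).
Proof.
  intros Hr1 Hr2 Ha Hb Hab. set (T := th / 2).
  assert (HT : 0 < cos T) by (apply cos_gt_0; unfold T; lra).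
  assert (Hprod : 4 * (r1 * sin a) * (r2 * sin (th - b))
                  = 2 * (r1 * r2) * (cos (a + b - th) - cos (a - b + th))).
  { replace (a + b - th) with (a - (th - b)) by ring.
    replace (a - b + th) with (a + (th - b)) by ring.
    rewrite cos_minus, cos_plus. ring. }
  assert (Hsum : cos (a - b) + cos (a - b + th) <= 2 * cos T).
  { rewrite form1. replace ((a - b - (a - b + th)) / 2) with (- T) by (unfold T; field).
    rewrite cos_neg. pose proof (COS_bound ((a - b + (a - b + th)) / 2)). nra. }
  pose proof (cos_half_angle_ineq (a + b) ltac:(lra)) as Hg. fold T in Hg.
  (* The difference of the two sides is 2 P1 + 2 P2 + P3. *)
  assert (P1 : 0 <= r1 * r2 * (cos T + cos (a + b)
                               + (1 + cos T) * (cos (a + b - th) - 2 * cos T))).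
  { apply Rmult_le_pos; [nra|exact Hg]. }
  assert (P2 : 0 <= r1 * r2 * (1 + cos T) * (2 * cos T - (cos (a - b) + cos (a - b + th)))).
  { pose proof (COS_bound T). apply Rmult_le_pos; [apply Rmult_le_pos|]; nra. }
  assert (P3 : 0 <= cos T * (r1 - r2) ^ 2) by (apply Rmult_le_pos; [lra|apply pow2_ge_0]).
  rewrite Hprod. lra.
Qed.

Lemma short_detour_polar_le (r1 r2 a b : R) :
  0 < r1 -> 0 < r2 -> 0 < a <= b -> a + b <= th ->
  short_detour (polar r1 a) (polar r2 b).
Proof.
  intros Hr1 Hr2 Hab Hsum.
  assert (Hx : sector th (polar r1 a)) by (exists r1, a; repeat split; lra).
  assert (Hy : sector th (polar r2 b)) by (exists r2, b; repeat split; lra).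
  assert (Hmx : dist_edges (polar r1 a) = r1 * sin a) by (apply dist_edges_polar; lra).
  assert (Hsa : 0 < sin a) by (apply sin_gt_0; lra).
  assert (HT : 0 < cos (th / 2)) by (apply cos_gt_0; lra).
  apply short_detour_of_axis; [exact Hx|exact Hy| |].
  { rewrite snd_polar_mult. apply Rmult_le_pos; [nra|apply sin_ge_0; lra]. }
  rewrite sharp_const_sq, Hmx.
  destruct (Rle_or_lt b (th / 2)) as [Hb|Hb].
  - assert (Hmy : dist_edges (polar r2 b) = r2 * sin b) by (apply dist_edges_polar; lra).
    assert (Hsb : 0 < sin b) by (apply sin_gt_0; lra).
    rewrite Cmod_sub_conj_sq, Hmy. simpl.
    pose proof (pow2_ge_0 (Cmod (polar r1 a - polar r2 b))).
    assert (0 < r1 * sin a * (r2 * sin b)) by (apply Rmult_lt_0_compat; nra).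
    nra.
  - assert (Hmy : dist_edges (polar r2 b) = r2 * sin (th - b)).
    { replace b with (th - (th - b)) at 1 by ring.
      rewrite <- bisector_refl_polar, dist_edges_bisector_refl.
      apply dist_edges_polar; lra. }
    rewrite Hmy, Cconj_polar, !Cmod_polar_sub_sq.
    replace (a - - b) with (a + b) by ring.
    apply polar_opposite_halves_ineq; lra.
Qed.

Lemma short_detour_polar_sum_le (r1 r2 a b : R) :
  0 < r1 -> 0 < r2 -> 0 < a -> 0 < b -> a + b <= th ->
  short_detour (polar r1 a) (polar r2 b).
Proof.
  intros Hr1 Hr2 Ha Hb Hsum. destruct (Rle_or_lt a b).
  - apply short_detour_polar_le; lra.
  - apply short_detour_sym, short_detour_polar_le; lra.
Qed.

Lemma short_detour_sector (x y : C) : sector th x -> sector th y -> short_detour x y.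
Proof.
  intros (r1 & a & Hr1 & Ha & ->) (r2 & b & Hr2 & Hb & ->).
  fold (polar r1 a) (polar r2 b).
  destruct (Rle_or_lt (a + b) th).
  - apply short_detour_polar_sum_le; lra.
  - apply short_detour_bisector_refl. rewrite !bisector_refl_polar.
    apply short_detour_polar_sum_le; lra.
Qed.

Lemma p_metric_div_le_s_metric (x y : C) : sector th x -> sector th y ->
  p_metric (sector th) x y / sharp_const <= s_metric (sector th) x y.
Proof.
  intros Hx Hy.
  destruct (short_detour_sector x y Hx Hy) as [z [Hz Hdet]].
  destruct (dist_bd_between x z Hz) as [Hdx _].
  destruct (dist_bd_between y z Hz) as [Hdy _].
  pose proof (dist_edges_pos x Hx) as Hmx. pose proof (dist_edges_pos y Hy) as Hmy.
  destruct (detour_inf_between x y z (Cmod (x - y)) Hz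
              (fun z' _ => Cmod_sub_triangle x z' y)) as [HI1 HI2].
  pose proof sharp_const_pos as HK. pose proof (Cmod_ge_0 (x - y)) as HD0.
  unfold p_metric, s_metric. fold (detour_inf x y).
  set (D := Cmod (x - y)) in *.
  set (S := sqrt (D ^ 2 + 4 * dist_bd (sector th) x * dist_bd (sector th) y)).
  destruct (Req_dec D 0) as [E|E].
  { rewrite E. unfold Rdiv. rewrite !Rmult_0_l. lra. }
  assert (HS : 0 < S) by (apply sqrt_lt_R0; nra).
  replace (D / S / sharp_const) with (D / (sharp_const * S)) by (field; lra).
  apply Rdiv_le_contravar_r; [lra|lra|].
  eapply Rle_trans; [exact HI2|]. eapply Rle_trans; [exact Hdet|].
  apply Rmult_le_compat_l; [lra|]. apply sqrt_le_1_alt. nra.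
Qed.

Lemma Cmod_conj_le_detour_inf_refl (x : C) :
  Cmod (x - Cconj (bisector_refl x)) <= detour_inf x (bisector_refl x).
Proof.
  apply (detour_inf_between _ _ (0, 0)); [apply boundary_nonneg_real; lra|].
  intros z Hz. destruct (boundary_on_edges z Hz) as [E|E].
  - apply Cmod_conj_le_detour, E.
  - rewrite <- (Cmod_bisector_refl x z), <- (Cmod_bisector_refl z (bisector_refl x)).
    rewrite bisector_refl_involutive, Cmod_sub_conj_sym.
    apply Cmod_conj_le_detour, E.
Qed.

Lemma Cmod_quarter_pair_sq :
  Cmod (polar 1 (th / 4) - polar 1 (th - th / 4)) ^ 2 = 4 * sin (th / 4) ^ 2.
Proof.
  rewrite Cmod_polar_sub_sq.
  replace (th / 4 - (th - th / 4)) with (- (2 * (th / 4))) by field.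
  rewrite cos_neg, cos_2a_sin. ring.
Qed.

Lemma Cmod_conj_quarter_pair_sq :
  Cmod (polar 1 (th / 4) - Cconj (polar 1 (th - th / 4))) ^ 2
    = sharp_const ^ 2 * (8 * sin (th / 4) ^ 2).
Proof.
  rewrite Cconj_polar, Cmod_polar_sub_sq, sharp_const_sq.
  replace (th / 4 - - (th - th / 4)) with (2 * (2 * (th / 4))) by field.
  replace (th / 2) with (2 * (th / 4)) by field.
  rewrite cos_2a_sin, sin_2a, cos_2a_cos. ring.
Qed.

Lemma s_metric_lt_p_metric_div (k : R) : 0 < k < sharp_const ->
  exists x y : C, sector th x /\ sector th y /\
    s_metric (sector th) x y < p_metric (sector th) x y / k.
Proof.
  intros [Hk HkK]. set (a := th / 4).
  set (x := polar 1 a). set (y := polar 1 (th - a)).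
  assert (Hyx : bisector_refl x = y) by apply bisector_refl_polar.
  assert (Hsa : 0 < sin a) by (apply sin_gt_0; unfold a; lra).
  assert (Hca : 0 < cos a) by (apply cos_gt_0; unfold a; lra).
  assert (Hx : sector th x) by (exists 1, a; unfold a; repeat split; lra).
  assert (Hy : sector th y) by (rewrite <- Hyx; apply sector_bisector_refl, Hx).
  exists x, y. split; [exact Hx|]. split; [exact Hy|].
  set (z0 := (cos a, 0)).
  assert (Hz0 : boundary (sector th) z0) by (apply boundary_nonneg_real; lra).
  assert (Hxz0 : Cmod (x - z0) = sin a).
  { apply Cmod_sub_eq; [lra|]. simpl. ring. }
  destruct (dist_bd_between x z0 Hz0) as [Hdx1 Hdx2].
  destruct (dist_bd_between y (bisector_refl z0) (boundary_bisector_refl z0 Hz0))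
    as [Hdy1 Hdy2].
  rewrite <- Hyx, Cmod_bisector_refl, Hyx in Hdy2.
  pose proof (dist_edges_pos x Hx) as Hmx. pose proof (dist_edges_pos y Hy) as Hmy.
  pose proof (Cmod_conj_le_detour_inf_refl x) as HI. rewrite Hyx in HI.
  unfold p_metric, s_metric. fold (detour_inf x y).
  pose proof (Cmod_quarter_pair_sq) as HD2. pose proof (Cmod_conj_quarter_pair_sq) as Hconj2.
  fold a x y in HD2, Hconj2.
  pose proof (Cmod_ge_0 (x - y)) as HD0.
  set (D := Cmod (x - y)) in *.
  set (S := sqrt (D ^ 2 + 4 * dist_bd (sector th) x * dist_bd (sector th) y)).
  assert (HD : 0 < D).
  { assert (0 < D ^ 2) by (rewrite HD2; nra). nra. }
  assert (HS : 0 < S) by (apply sqrt_lt_R0; nra).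
  assert (HS2 : S ^ 2 <= 8 * sin a ^ 2) by (unfold S; rewrite pow2_sqrt; nra).
  assert (HKS : sharp_const * S <= Cmod (x - Cconj y)).
  { pose proof sharp_const_pos. pose proof (Cmod_ge_0 (x - Cconj y)). nra. }
  replace (D / S / k) with (D / (k * S)) by (field; lra).
  apply Rdiv_lt_contravar_r; [lra|nra|nra].
Qed.

End Sector.

Theorem theorem3p8 (theta : R) (Htheta : 0 < theta < PI) :
  (forall x y : C, sector theta x -> sector theta y ->
     p_metric (sector theta) x y / (sqrt 2 * cos (theta / 4))
       <= s_metric (sector theta) x y) /\
  (* sharpness: the constant sqrt 2 * cos(theta/4) cannot be decreased *)
  (forall k : R, 0 < k < sqrt 2 * cos (theta / 4) ->
     exists x y : C, sector theta x /\ sector theta y /\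
       s_metric (sector theta) x y < p_metric (sector theta) x y / k).
Proof.
  split.
  - exact (p_metric_div_le_s_metric theta Htheta).
  - exact (s_metric_lt_p_metric_div theta Htheta).
Qed.
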